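(* Let $\mathcal{T}=(V,A,E,f,q,v_0)$ be a decorated rooted tree such that $f(\alpha)\in\{0,1\}$ for all $\alpha\in A$. Then for every out-pair $(x,e)$ of $\mathcal{T}$, $$p(x,e)=1+\sum_{y\in Y(x,e)}\phi(x,y)(\delta_y-2).$$
   Context: A graph is a pair $(X_0,X_1)$ of finite sets such that each element of $X_1$ (an edge) is a $2$-element subset of $X_0$; elements of $X_0$ are cells. The valency $\delta_x$ of a cell is the number of edges containing it. A path is a tuple $(x_0,\dots,x_n)$ ($n\ge0$) of cells with $\{x_i,x_{i+1}\}$ an edge for each $i<n$, these edges pairwise distinct; a cell/edge is in the path if it is some $x_i$ / some $\{x_i,x_{i+1}\}$. The graph is a tree if any two cells $x,y$ are joined by a unique path $\gamma_{x,y}$. A decorated tree is $(V,A,E,f,q)$ with $V$ (vertices), $A$ (arrows) finite disjoint sets, $(V\cup A,E)$ a tree, every arrow of valency $1$, $f:A\to\mathbb{Z}$, $q(e,x)\in\mathbb{Z}$ for each $e\in E$, $x\in e$, with $q(e,\alpha)=1$ for $\alpha\in A$, and for each $v\in V$ and distinct edges $e,e'\ni v$, $\gcd(q(e,v),q(e',v))=1$. $A_0=\{\alpha\in A:f(\alpha)=0\}$. An edge $\varepsilon$ is incident to a path $\gamma$ if it is not in $\gamma$ but contains a cell $u$ of $\gamma$; $q(\varepsilon,\gamma):=q(\varepsilon,u)$. For $v\ne\alpha$, $v\in V\cup A$, $\alpha\in A$: $\hat x_{v,\alpha}=f(\alpha)\prod_\varepsilon q(\varepsilon,\gamma_{v,\alpha})$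 over edges $\varepsilon$ incident to $\gamma_{v,\alpha}$ and not containing $v$ (empty product $=1$). For $u\in V\cup A$, $e\ni u$: $p(u,e)=\sum\hat x_{u,\alpha}$ over $\alpha\in A\setminus A_0$ with $e$ in $\gamma_{u,\alpha}$. For a path $\gamma=(x_0,\dots,x_n)$, $n\ge1$, $\phi(\gamma)$ is the product of $q(e,u)$ over all pairs with $u\in\{x_1,\dots,x_n\}$ and $e$ an edge containing $u$ not in $\gamma$; for $x\ne y$, $\phi(x,y)=\phi(\gamma_{x,y})$. For $x\in V\cup A$ and an edge $e\ni x$, $Y(x,e)=\{y\in V\cup A_0: e \text{ is in } \gamma_{x,y}\}$. A root of $(V,A,E,f,q)$ is a vertex $v_0$ with $q(e,v_0)=1$ for every edge $e\ni v_0$ such that for every $v\in V\setminus\{v_0\}$, all edges $e\ni v$ not in $\gamma_{v_0,v}$ satisfy $q(e,v)\ge1$ and at most one of them satisfies $q(e,v)\ne1$. A decorated rooted tree is $(V,A,E,f,q,v_0)$ with $v_0$ a root. For distinct $x,y$, $x<y$ means $x$ is in $\gamma_{v_0,y}$. An out-pair is a pair $(x,e)$ with $x\in V\cup A$ and $e=\{x,x'\}$ an edge such that $x<x'$. *)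

From Stdlib Require Import ClassicalEpsilon.
From mathcomp Require Import all_boot all_order all_algebra.
Set Implicit Arguments. Unset Strict Implicit. Unset Printing Implicit Defensive.
Import Order.TTheory GRing.Theory Num.Theory.
Local Open Scope ring_scope.

(* Cells X_0 = V \cup A are the elements of a finType T; the arrows are the
   cells satisfying [isA], the vertices those not satisfying it.
   Edges form a set E of subsets of T (each required to have 2 elements).
   q e x is an integer for each edge e and cell x (only meaningful for x \in e).
   f is an integer labelling (only meaningful on arrows). *)
Section Defs.
Variable T : finType.
Variable E : {set {set T}}.

Definition edges_of (s : seq T) : seq {set T} :=
  [seq [set ab.1; ab.2] | ab <- zip s (behead s)].

Definition is_path (s : seq T) : bool :=
  (s != [::]) && all (fun e => e \in E) (edges_of s) && uniq (edges_of s).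

Definition path_from (x y : T) (s : seq T) : bool :=
  [&& is_path s, head x s == x & last x s == y].

Definition is_graph : Prop := forall e, e \in E -> #|e| = 2.

Definition is_tree : Prop :=
  is_graph /\ forall x y : T, exists! s : seq T, path_from x y s.

Definition gamma (x y : T) : seq T :=
  epsilon (inhabits [::]) (fun s => path_from x y s).

Definition valency (x : T) : nat := #|[set e in E | x \in e]|.

Variable isA : pred T.
Variable f : T -> int.
Variable q : {set T} -> T -> int.

Definition is_vertex (x : T) : bool := ~~ isA x.
Definition in_A0 (x : T) : bool := isA x && (f x == 0).

Definition decorated_tree : Prop :=
  [/\ is_tree,
      (forall a, isA a -> valency a = 1%N),
      (forall e a, e \in E -> a \in e -> isA a -> q e a = 1) &
      (forall v e e', is_vertex v -> e \in E -> e' \in E -> v \in e -> v \in e' ->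
          e != e' -> gcdz (q e v) (q e' v) = 1)].

Definition incident (eps : {set T}) (g : seq T) : bool :=
  [&& eps \in E, eps \notin edges_of g & [exists u in eps, u \in g]].

Definition q_path (eps : {set T}) (g : seq T) : int :=
  match [pick u in eps | u \in g] with Some u => q eps u | None => 1 end.

Definition xhat (v a : T) : int :=
  f a * \prod_(eps in E | incident eps (gamma v a) && (v \notin eps))
          q_path eps (gamma v a).

Definition pfun (u : T) (e : {set T}) : int :=
  \sum_(a : T | [&& isA a, f a != 0 & e \in edges_of (gamma u a)]) xhat u a.

Definition phi_path (g : seq T) : int :=
  \prod_(u <- behead g) \prod_(e in E | (u \in e) && (e \notin edges_of g)) q e u.

Definition phi (x y : T) : int := phi_path (gamma x y).

Definition Yset (x : T) (e : {set T}) : {set T} :=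
  [set y | (is_vertex y || in_A0 y) && (e \in edges_of (gamma x y))].

Definition is_root (v0 : T) : Prop :=
  [/\ is_vertex v0,
      (forall e, e \in E -> v0 \in e -> q e v0 = 1) &
      forall v, is_vertex v -> v != v0 ->
        (forall e, e \in E -> v \in e -> e \notin edges_of (gamma v0 v) -> 1 <= q e v)
        /\ (#|[set e in E | (v \in e) && (e \notin edges_of (gamma v0 v))
                             && (q e v != 1)]| <= 1)%N].

Definition decorated_rooted_tree (v0 : T) : Prop := decorated_tree /\ is_root v0.

Definition tree_lt (v0 x y : T) : bool := (x != y) && (x \in gamma v0 y).

Definition out_pair (v0 x : T) (e : {set T}) : Prop :=
  e \in E /\ exists x', e = [set x; x'] /\ tree_lt v0 x x'.

End Defs.

(* Induct on the branch behind the out-edge e = {x, x'}.  Every arrow counted by p(x, e)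
   and every cell of Y(x, e) is either x' or lies behind exactly one other edge e' at x',
   and moving the base point of \hat x and phi from x to x' multiplies them by the
   weights q(e'', x') of the edges e'' at x' that are neither e nor on the way to that
   cell.  So both sides obey the same recursion over the out-pairs (x', e'), up to the
   constant 1 and the contribution of x' itself.  At an arrow x' both sides equal
   f(x'); at a vertex the root condition (at most one weight q(e', x') differs from 1)
   gives  sum_e' prod_(e'' <> e') q(e'', x') = 1 + (delta_x' - 2) prod_e' q(e', x'). *)

From Stdlib Require Import ClassicalEpsilon.
From mathcomp Require Import all_boot all_order all_algebra.
Set Implicit Arguments. Unset Strict Implicit. Unset Printing Implicit Defensive.
From mathcomp Require Import ring.
Import Order.TTheory GRing.Theory Num.Theory.
Local Open Scope ring_scope.

Section ProdButOne.
Variables (R : comRingType) (I : finType) (C : {set I}) (w : I -> R).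

Lemma sum_prod_but_one_pivot i0 :
  i0 \in C -> {in C, forall j, j != i0 -> w j = 1} ->
  \sum_(i in C) \prod_(j in C | j != i) w j = 1 + (\prod_(j in C) w j) * (#|C|%:R - 1).
Proof.
move=> Ci0 w1.
have prod_but i : i \in C -> \prod_(j in C | j != i) w j = if i == i0 then 1 else w i0.
  move=> Ci; case: eqVneq => [-> | ii0].
    by apply: big1 => j /andP[Cj ji0]; apply: w1.
  rewrite (bigD1 i0) /=; last by rewrite Ci0 eq_sym.
  by rewrite big1 ?mulr1 // => j /andP[/andP[Cj _] ji0]; apply: w1.
have -> : \prod_(j in C) w j = w i0.
  by rewrite (bigD1 i0) //= big1 ?mulr1 // => j /andP[Cj ji0]; apply: w1.
rewrite (eq_bigr _ prod_but) (bigD1 i0) //= eqxx.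
rewrite (eq_bigr (fun=> w i0)) => [|i /andP[_ /negbTE ->] //].
by rewrite sumr_const (cardD1x Ci0) natrD addrAC subrr add0r mulr_natr.
Qed.

Lemma sum_prod_but_one : (#|[set i in C | w i != 1%R]| <= 1)%N ->
  \sum_(i in C) \prod_(j in C | j != i) w j = 1 + (\prod_(j in C) w j) * (#|C|%:R - 1).
Proof.
move=> le1; have [-> | [i0 Ci0]] := set_0Vmem C.
  by rewrite !big_set0 cards0; ring.
case: (pickP [pred i in C | w i != 1]) => [i1 /andP[Ci1 wi1] | none].
  apply: (sum_prod_but_one_pivot Ci1) => j Cj ji1; apply/eqP.
  apply: contraTT le1 => wj; rewrite -ltnNge.
  apply: (@leq_trans #|[set i1; j]|); first by rewrite cards2 eq_sym ji1.
  apply/subset_leq_card/subsetP => z.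
  by rewrite !inE => /orP[] /eqP ->; rewrite ?Ci1 ?wi1 ?Cj ?wj.
apply: (sum_prod_but_one_pivot Ci0) => j Cj _.
by apply/eqP; move: (none j); rewrite /= Cj => /negbFE.
Qed.

End ProdButOne.

Lemma card2_set2 (T : finType) (A : {set T}) a b :
  #|A| = 2 -> a \in A -> b \in A -> a != b -> A = [set a; b].
Proof.
move=> cardA Aa Ab ab; symmetry; apply/eqP; rewrite eqEcard cardA cards2 ab andbT.
by apply/subsetP => z; rewrite !inE => /orP[] /eqP ->.
Qed.

Section EdgesOf.
Variables (T : finType) (E : {set {set T}}).

Lemma edges_of_cons2 (a b : T) (s : seq T) :
  edges_of (a :: b :: s) = [set a; b] :: edges_of (b :: s).
Proof. by []. Qed.

Lemma edges_of_cat (a b : T) (s1 s2 : seq T) :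
  edges_of (a :: s1 ++ b :: s2) =
  edges_of (a :: s1) ++ [set last a s1; b] :: edges_of (b :: s2).
Proof. by elim: s1 a => [|a' s1 IH] a //=; rewrite -IH. Qed.

Lemma edges_of_rcons (a z : T) (s : seq T) :
  edges_of (rcons (a :: s) z) = rcons (edges_of (a :: s)) [set last a s; z].
Proof. by rewrite rcons_cons -cats1 edges_of_cat cats1. Qed.

Lemma mem_edges_catl (s1 s2 : seq T) eps :
  eps \in edges_of s1 -> eps \in edges_of (s1 ++ s2).
Proof.
case: s1 => [|a s1] //; case: s2 => [|b s2]; first by rewrite cats0.
by rewrite edges_of_cat mem_cat => ->.
Qed.

Lemma mem_edges_catr (s1 s2 : seq T) eps :
  eps \in edges_of s2 -> eps \in edges_of (s1 ++ s2).
Proof.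
case: s1 => [|a s1] //; case: s2 => [|b s2] //.
by rewrite edges_of_cat mem_cat inE => ->; rewrite !orbT.
Qed.

Lemma mem_edges_of (s : seq T) eps u : eps \in edges_of s -> u \in eps -> u \in s.
Proof.
elim: s => [|a s IH] //; case: s IH => [|b s] IH //.
rewrite edges_of_cons2 inE => /orP[/eqP -> | eps_s].
  by rewrite !inE => /orP[] ->; rewrite ?orbT.
by move=> u_eps; rewrite inE (IH eps_s u_eps) orbT.
Qed.

Lemma edges_of_head (z : T) (t : seq T) eps : uniq (z :: t) ->
  eps \in edges_of (z :: t) -> z \in eps -> eps = [set z; head z t].
Proof.
case: t => [|b t] // uniq_zt; rewrite edges_of_cons2 inE => /orP[/eqP -> //|eps_bt] z_eps.
by move: uniq_zt; rewrite cons_uniq (mem_edges_of eps_bt z_eps).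
Qed.

Lemma is_path_prefix (s1 s2 : seq T) : is_path E (s1 ++ s2) -> s1 != [::] -> is_path E s1.
Proof.
case: s1 => [|a s1] //; case: s2 => [|b s2]; first by rewrite cats0.
by rewrite /is_path edges_of_cat all_cat cat_uniq => /andP[/andP[_ /andP[-> _]] /andP[-> _]].
Qed.

Lemma is_path_suffix (s1 s2 : seq T) : is_path E (s1 ++ s2) -> s2 != [::] -> is_path E s2.
Proof.
case: s1 => [|a s1] //; case: s2 => [|b s2] //.
rewrite /is_path edges_of_cat all_cat cat_uniq => /andP[/andP[_ /andP[_ /= /andP[_ ->]]]].
by move=> /and3P[_ _ /= /andP[_ ->]].
Qed.

Lemma incident_cons_notin (x : T) s (eps : {set T}) :
  x \notin eps -> incident E eps (x :: s) = incident E eps s.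
Proof.
move=> x_eps; rewrite /incident; congr (_ && (_ && _)).
  case: s => [|b t] //; rewrite edges_of_cons2 in_cons negb_or.
  by have -> : eps != [set x; b] by apply: contraNneq x_eps => ->; rewrite set21.
apply: eq_existsb => u; rewrite in_cons; case: eqVneq => [-> | _] //=.
by rewrite (negbTE x_eps).
Qed.

End EdgesOf.

Section Tree.
Variables (T : finType) (E : {set {set T}}).
Hypothesis Etree : is_tree E.

Lemma edge_card eps : eps \in E -> #|eps| = 2.
Proof. by case: Etree => card2 _ /card2. Qed.

Lemma edge_set2 eps a b : eps \in E -> a \in eps -> b \in eps -> a != b -> eps = [set a; b].
Proof. by move/edge_card; apply: card2_set2. Qed.

Lemma edge_neq x y : [set x; y] \in E -> x != y.
Proof. by move/edge_card; apply: contra_eqN => /eqP <-; rewrite setUid cards1. Qed.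

Lemma path_from_unique x y s1 s2 : path_from E x y s1 -> path_from E x y s2 -> s1 = s2.
Proof. by case: Etree => _ /(_ x y) [s0 [_ s0_uniq]] /s0_uniq <- /s0_uniq <-. Qed.

Lemma gammaP x y : path_from E x y (gamma E x y).
Proof.
case: Etree => _ /(_ x y) [s0 [s0P _]].
exact: (epsilon_spec (inhabits [::]) (path_from E x y) (ex_intro _ s0 s0P)).
Qed.

Lemma gammaE x y s : path_from E x y s -> gamma E x y = s.
Proof. exact: path_from_unique (gammaP x y). Qed.

Lemma gamma_path x y : is_path E (gamma E x y).
Proof. by case/and3P: (gammaP x y). Qed.

Lemma gamma_head x y : gamma E x y = x :: behead (gamma E x y).
Proof. by case/and3P: (gammaP x y); case: (gamma E x y) => //= a s _ /eqP ->. Qed.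

Lemma gamma_head_ex x y : exists t, gamma E x y = x :: t.
Proof. by exists (behead (gamma E x y)); apply: gamma_head. Qed.

Lemma gamma_last x y : last x (gamma E x y) = y.
Proof. by case/and3P: (gammaP x y) => _ _ /eqP. Qed.

Lemma gamma_self x : gamma E x x = [:: x].
Proof. by apply: gammaE; rewrite /path_from /= !eqxx. Qed.

Lemma gamma_edge x y : [set x; y] \in E -> gamma E x y = [:: x; y].
Proof. by move=> xy_E; apply: gammaE; rewrite /path_from /is_path /= xy_E !eqxx. Qed.

Lemma path_uniq (s : seq T) : is_path E s -> uniq s.
Proof.
elim: s => [|a t IH] //; case: t IH => [|b t] IH // s_path.
rewrite cons_uniq (IH (@is_path_suffix _ _ [:: a] _ s_path isT)) andbT.
apply/negP => a_bt; move: s_path; case/splitPr: a_bt => t1 t2.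
have -> : a :: t1 ++ a :: t2 = ([:: a] ++ t1 ++ [:: a]) ++ t2 by rewrite /= -catA.
move=> s_path; have loop_path := is_path_prefix s_path isT.
have : path_from E a a ([:: a] ++ t1 ++ [:: a]).
  by rewrite /path_from loop_path /= last_cat /= eqxx.
by move/(path_from_unique (gammaP a a)); rewrite gamma_self; case: t1 {s_path loop_path}.
Qed.

Lemma gamma_uniq x y : uniq (gamma E x y).
Proof. exact: path_uniq (gamma_path x y). Qed.

Lemma path_chordless_fwd s1 u s2 w : is_path E (s1 ++ u :: s2) -> w \in s2 ->
  [set u; w] \in E -> [set u; w] \in edges_of (s1 ++ u :: s2).
Proof.
move=> + w_s2 uw_E; case/splitPr: w_s2 => s3 s4.
have -> : s1 ++ u :: s3 ++ w :: s4 = s1 ++ ((u :: s3) ++ [:: w]) ++ s4 by rewrite -!catA.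
move=> s_path; have uw_path := is_path_prefix (is_path_suffix s_path isT) isT.
have : path_from E u w ((u :: s3) ++ [:: w]).
  by rewrite /path_from uw_path /= eqxx last_cat /= eqxx.
move/(path_from_unique (gammaP u w)); rewrite gamma_edge //.
case: s3 {s_path uw_path} => [|z [|z' s3]] // _.
by apply/mem_edges_catr/mem_edges_catl; rewrite inE.
Qed.

Lemma path_chordless s u w : is_path E s -> u \in s -> w \in s -> u != w ->
  [set u; w] \in E -> [set u; w] \in edges_of s.
Proof.
move=> + u_s; case/splitPr: u_s => s1 s2 s_path.
rewrite mem_cat inE eq_sym => /orP[w_s1 | /orP[/eqP <- | w_s2]]; last 2 first.
- by rewrite eqxx.
- by move=> _; apply: path_chordless_fwd.
move: s_path; case/splitPr: w_s1 => s3 s4; rewrite -catA cat_cons => s_path _.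
by rewrite setUC => wu_E; apply: path_chordless_fwd; rewrite // mem_cat inE eqxx orbT.
Qed.

Lemma gamma_head_edge_uniq x y eps1 eps2 :
  eps1 \in edges_of (gamma E x y) -> eps2 \in edges_of (gamma E x y) ->
  x \in eps1 -> x \in eps2 -> eps1 = eps2.
Proof.
have xy_uniq := gamma_uniq x y; rewrite gamma_head in xy_uniq *.
by move=> e1 e2 x_e1 x_e2; rewrite (edges_of_head xy_uniq e1 x_e1) (edges_of_head xy_uniq e2 x_e2).
Qed.

Lemma gamma_cons x x' y : [set x; x'] \in E ->
  [set x; x'] \notin edges_of (gamma E x' y) -> gamma E x y = x :: gamma E x' y.
Proof.
move=> xx'_E notin; apply: gammaE.
have := gamma_path x' y; have := gamma_last x' y; have [t x'y] := gamma_head_ex x' y.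
rewrite x'y in notin *; rewrite /path_from /is_path edges_of_cons2 /= xx'_E notin /=.
by move=> -> ->; rewrite !eqxx.
Qed.

Lemma gamma_edge_swap x x' y : [set x; x'] \in E ->
  [set x; x'] \in edges_of (gamma E x y) -> [set x; x'] \notin edges_of (gamma E x' y).
Proof.
move=> xx'_E xx'_in; have x_x' := edge_neq xx'_E.
have := gamma_uniq x y; have := gamma_path x y; have := gamma_last x y.
have [[|b t] xy] := gamma_head_ex x y; rewrite xy in xx'_in * => //.
move=> xy_last xy_path xy_uniq.
have b_x' : b = x'.
  move: (edges_of_head xy_uniq xx'_in (setU11 _ _)) => /setP /(_ x'); rewrite !inE eqxx orbT.
  by rewrite eq_sym (negbTE x_x') => /esym /eqP.
subst b; have -> : gamma E x' y = x' :: t.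
  by apply: gammaE; rewrite /path_from (@is_path_suffix _ _ [:: x]) //= -xy_last /= !eqxx.
apply/negP => /mem_edges_of /(_ (setU11 _ _)).
by move: xy_uniq; rewrite cons_uniq => /andP[/negP].
Qed.

Lemma mem_edges_gamma_swap x x' y : [set x; x'] \in E ->
  ([set x; x'] \in edges_of (gamma E x y)) = ([set x; x'] \notin edges_of (gamma E x' y)).
Proof.
move=> xx'_E; apply/idP/idP; first exact: gamma_edge_swap.
move=> notin; rewrite (gamma_cons xx'_E notin); have [t ->] := gamma_head_ex x' y.
by rewrite edges_of_cons2 mem_head.
Qed.

Lemma gamma_rcons v x c : [set x; c] \in E ->
  [set x; c] \notin edges_of (gamma E v x) -> gamma E v c = rcons (gamma E v x) c.
Proof.
move=> xc_E notin; apply: gammaE.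
have := gamma_path v x; have := gamma_last v x; have [t vx] := gamma_head_ex v x.
rewrite vx in notin * => /= vx_last.
rewrite /path_from /is_path edges_of_rcons vx_last all_rcons rcons_uniq xc_E notin /=.
by move=> ->; rewrite last_rcons !eqxx.
Qed.

Lemma mem_edges_gamma_last v x x' eps : [set x; x'] \in E -> x \in gamma E v x' ->
  eps \in E -> x' \in eps -> (eps \in edges_of (gamma E v x')) = (eps == [set x; x']).
Proof.
move=> xx'_E x_in eps_E x'_eps.
move: (gamma_path v x') (gamma_last v x') (gamma_uniq v x').
case/splitPr: x_in => s1 s2 vx'_path vx'_last.
have -> : x :: s2 = [:: x; x'].
  rewrite -(gamma_edge xx'_E); symmetry; apply: gammaE.
  rewrite /path_from (is_path_suffix vx'_path) //= eqxx /=.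
  by move: vx'_last; rewrite last_cat /= => ->.
have [a [r [s1x_eq r_last]]] : exists a r, s1 ++ [:: x] = a :: r /\ last a r = x.
  case: s1 {vx'_path vx'_last} => [|a r]; first by exists x, [::].
  by exists a, (r ++ [:: x]); rewrite last_cat.
have -> : s1 ++ [:: x; x'] = rcons (a :: r) x' by rewrite -s1x_eq -cats1 -catA.
rewrite edges_of_rcons r_last mem_rcons inE rcons_uniq => /andP[x'_notin _].
have [-> | _] //= := eqVneq eps [set x; x'].
by apply: contraNF x'_notin => /mem_edges_of; apply.
Qed.

Definition child_edges x x' := [set eps in E | (x' \in eps) && (eps != [set x; x'])].

Definition branch x x' := [set y | [set x; x'] \in edges_of (gamma E x y)].

Lemma child_edge_gamma x x' y : [set x; x'] \in E -> y != x' ->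
  [set x; x'] \in edges_of (gamma E x y) ->
  exists2 eps, eps \in child_edges x x' & eps \in edges_of (gamma E x' y).
Proof.
move=> xx'_E y_x' /(gamma_edge_swap xx'_E) notin.
have := gamma_path x' y; have := gamma_last x' y.
have [t x'y] := gamma_head_ex x' y; rewrite x'y in notin *.
case: t {x'y} notin => [|b t] notin /= last_y x'y_path; first by rewrite last_y eqxx in y_x'.
exists [set x'; b]; last by rewrite edges_of_cons2 mem_head.
have x'b_E : [set x'; b] \in E.
  by move: x'y_path => /andP[/andP[_ /allP all_E] _]; apply: all_E; rewrite edges_of_cons2 mem_head.
rewrite inE setU11 x'b_E /=.
by apply: contraNneq notin => <-; rewrite edges_of_cons2 mem_head.
Qed.

Lemma child_edge_branch x x' y eps : [set x; x'] \in E ->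
  eps \in child_edges x x' -> eps \in edges_of (gamma E x' y) ->
  [set x; x'] \in edges_of (gamma E x y).
Proof.
move=> xx'_E + eps_in; rewrite inE mem_edges_gamma_swap // => /and3P[_ x'_eps eps_neq].
apply: contra eps_neq => xx'_in.
by rewrite (gamma_head_edge_uniq eps_in xx'_in x'_eps (set22 _ _)).
Qed.

Lemma child_edge_gamma_uniq x x' y eps1 eps2 :
  eps1 \in child_edges x x' -> eps2 \in child_edges x x' ->
  eps1 \in edges_of (gamma E x' y) -> eps2 \in edges_of (gamma E x' y) -> eps1 = eps2.
Proof.
rewrite !inE => /and3P[_ x'_eps1 _] /and3P[_ x'_eps2 _] eps1_in eps2_in.
exact: gamma_head_edge_uniq eps1_in eps2_in x'_eps1 x'_eps2.
Qed.

Lemma sum_branch (R : nmodType) (P : pred T) (F : T -> R) x x' : [set x; x'] \in E ->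
  \sum_(y | P y && ([set x; x'] \in edges_of (gamma E x y))) F y =
  (if P x' then F x' else 0) +
  \sum_(eps in child_edges x x') \sum_(y | P y && (eps \in edges_of (gamma E x' y))) F y.
Proof.
move=> xx'_E.
have -> : (if P x' then F x' else 0) = \sum_(y | y == x') (if P y then F y else 0).
  by rewrite big_pred1_eq.
rewrite [in RHS](eq_bigr (fun eps =>
  \sum_y (if P y && (eps \in edges_of (gamma E x' y)) then F y else 0))); last first.
  by move=> eps _; rewrite big_mkcond.
rewrite exchange_big /= big_mkcond [X in X + _]big_mkcond -big_split /=.
apply: eq_bigr => y _.
case Py: (P y) => /=; last by rewrite if_same big1 ?addr0.
have [-> | y_x'] := eqVneq y x'.
  by rewrite gamma_edge // edges_of_cons2 mem_head gamma_self big1 ?addr0.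
rewrite add0r; case: ifP => [xx'_in | xx'_notin].
  have [eps1 eps1_child eps1_in] := child_edge_gamma xx'_E y_x' xx'_in.
  rewrite (bigD1 eps1) //= eps1_in big1 ?addr0 // => eps /andP[eps_child eps_neq].
  case: ifP => // eps_in.
  by move: eps_neq; rewrite (child_edge_gamma_uniq eps_child eps1_child eps_in eps1_in) eqxx.
rewrite big1 // => eps eps_child; case: ifP => // eps_in.
by rewrite (child_edge_branch xx'_E eps_child eps_in) in xx'_notin.
Qed.

Lemma branch_self x x' : [set x; x'] \in E -> x' \in branch x x'.
Proof. by move=> xx'_E; rewrite inE gamma_edge // edges_of_cons2 mem_head. Qed.

Lemma branch_child_proper x x' c : [set x; x'] \in E -> [set x'; c] \in child_edges x x' ->
  branch x' c \proper branch x x'.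
Proof.
move=> xx'_E x'c_child; apply/properP; split.
  by apply/subsetP => y; rewrite !inE => /(child_edge_branch xx'_E x'c_child).
by exists x'; rewrite ?branch_self // inE gamma_self.
Qed.

Lemma valency_child_edges x x' : [set x; x'] \in E -> valency E x' = #|child_edges x x'|.+1.
Proof.
move=> xx'_E; rewrite /valency (cardsD1 [set x; x']) in_set xx'_E set22 add1n; congr _.+1.
by apply: eq_card => eps; rewrite !inE andbC andbA.
Qed.

Lemma mem_gamma_last x y : y \in gamma E x y.
Proof.
have [t xy] := gamma_head_ex x y.
by move: (gamma_last x y); rewrite xy /= => <-; apply: mem_last.
Qed.

Lemma child_edge_out v x x' eps : [set x; x'] \in E -> x \in gamma E v x' ->
  eps \in child_edges x x' ->
  exists c, [/\ eps = [set x'; c], x' \in gamma E v c & branch x' c \proper branch x x'].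
Proof.
move=> xx'_E x_in eps_child; have := eps_child; rewrite inE => /and3P[eps_E x'_eps eps_neq].
have /cards1P[c eps_c] : #|eps :\ x'| == 1%N.
  by move: (edge_card eps_E); rewrite (cardsD1 x' eps) x'_eps add1n => -[->].
have : c \in eps :\ x' by rewrite eps_c set11.
rewrite !inE eq_sym => /andP[x'_c c_eps]; have eps_eq := edge_set2 eps_E x'_eps c_eps x'_c.
have x'c_E : [set x'; c] \in E by rewrite -eps_eq.
have notin : [set x'; c] \notin edges_of (gamma E v x').
  by rewrite -eps_eq (mem_edges_gamma_last xx'_E x_in eps_E x'_eps).
exists c; split => //.
  by rewrite (gamma_rcons x'c_E notin) mem_rcons in_cons mem_gamma_last orbT.
by apply: branch_child_proper; rewrite // -eps_eq.
Qed.

Lemma incident_cons2 x x' t (eps : {set T}) : is_path E [:: x, x' & t] -> x' \notin eps ->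
  incident E eps [:: x, x' & t] && (x \notin eps) = incident E eps (x' :: t).
Proof.
move=> s_path x'_eps; apply/andP/idP => [[inc x_eps] | inc].
  by rewrite -(incident_cons_notin E _ x_eps).
suff x_eps : x \notin eps by rewrite incident_cons_notin.
move: inc => /and3P[eps_E notin /existsP[u /andP[u_eps u_s]]].
apply/negP => x_eps.
have x_u : x != u by apply: contraTneq (path_uniq s_path) => ->; rewrite cons_uniq u_s.
have u_s' : u \in [:: x, x' & t] by rewrite in_cons u_s orbT.
have := path_chordless s_path (mem_head x _) u_s' x_u.
rewrite -(edge_set2 eps_E x_eps u_eps x_u) edges_of_cons2 in_cons (negbTE notin) orbF.
by move=> /(_ eps_E) /eqP eps_eq; move: x'_eps; rewrite eps_eq !inE eqxx orbT.
Qed.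

Lemma incident_cons2_at x x' t (eps : {set T}) : is_path E [:: x, x' & t] -> x' \in eps ->
  incident E eps [:: x, x' & t] && (x \notin eps) =
  (eps \in child_edges x x') && (eps \notin edges_of (x' :: t)).
Proof.
move=> s_path x'_eps.
have x_x' : x != x' by move: (path_uniq s_path); rewrite cons_uniq inE negb_or => /andP[/andP[]].
have meets : [exists u in eps, u \in [:: x, x' & t]].
  by apply/existsP; exists x'; rewrite x'_eps !inE eqxx orbT.
rewrite /incident meets edges_of_cons2 in_cons negb_or inE x'_eps andbT /=.
apply/idP/idP => [/andP[/and3P[-> -> ->] //] | /andP[/andP[eps_E eps_neq] ->]].
rewrite eps_E eps_neq /=; apply: contra eps_neq => x_eps.
by rewrite (edge_set2 eps_E x_eps x'_eps x_x').
Qed.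

Section Weights.
Variables (q : {set T} -> T -> int) (f : T -> int).

Lemma q_pathE s eps u : is_path E s -> eps \in E -> eps \notin edges_of s ->
  u \in eps -> u \in s -> q_path q eps s = q eps u.
Proof.
move=> s_path eps_E notin u_eps u_s; rewrite /q_path.
case: pickP => [u' /andP[u'_eps u'_s] | none]; last by move: (none u); rewrite u_eps u_s.
have [-> // | u'_u] := eqVneq u' u.
(* A tree path has no chords, so [eps] meets [s] in a single cell. *)
have eps_eq := edge_set2 eps_E u'_eps u_eps u'_u.
by move: notin; rewrite eps_eq path_chordless // -eps_eq.
Qed.

Lemma q_path_cons x s (eps : {set T}) : is_path E (x :: s) -> x \notin eps ->
  incident E eps s -> q_path q eps (x :: s) = q_path q eps s.
Proof.
move=> xs_path x_eps inc; have := inc; rewrite -(incident_cons_notin E s x_eps).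
case/and3P=> eps_E notin_xs _; case/and3P: inc => _ notin_s /existsP[u /andP[u_eps u_s]].
have u_xs : u \in x :: s by rewrite in_cons u_s orbT.
have s_path : is_path E s.
  by case: s u_s xs_path {notin_xs notin_s u_xs} => // b t _ /(@is_path_suffix _ _ [:: x]); apply.
by rewrite (q_pathE xs_path eps_E notin_xs u_eps u_xs) (q_pathE s_path eps_E notin_s u_eps u_s).
Qed.

Lemma xhat_cons x x' y : [set x; x'] \in E -> [set x; x'] \notin edges_of (gamma E x' y) ->
  xhat E f q x y = xhat E f q x' y *
    \prod_(eps in child_edges x x' | eps \notin edges_of (gamma E x' y)) q eps x'.
Proof.
move=> xx'_E notin; have xy_path := gamma_path x y.
rewrite /xhat (gamma_cons xx'_E notin) -mulrA in xy_path *; congr (_ * _).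
have [t x'y] := gamma_head_ex x' y; rewrite x'y in notin xy_path *.
rewrite (bigID (fun eps : {set T} => x' \in eps)) /= mulrC; congr (_ * _).
  apply: eq_big => [eps | eps /andP[/andP[_ inc] x'_eps]].
    have [x'_eps | x'_eps] := boolP (x' \in eps); first by rewrite !andbF.
    by rewrite -andbA incident_cons2 // andbT.
  by case/andP: inc => inc x_eps; rewrite q_path_cons // -(incident_cons2 xy_path x'_eps) inc.
apply: eq_big => [eps | eps /andP[/andP[eps_E /andP[/and3P[_ notin_eps _] _]] x'_eps]].
  have [x'_eps | x'_eps] := boolP (x' \in eps); last by rewrite !inE (negbTE x'_eps) !andbF.
  rewrite andbT incident_cons2_at // andbA; congr (_ && _).
  by rewrite inE; case: (eps \in E).
by rewrite (q_pathE xy_path eps_E notin_eps x'_eps) // !inE eqxx orbT.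
Qed.

Lemma phi_cons x x' y : [set x; x'] \in E -> [set x; x'] \notin edges_of (gamma E x' y) ->
  phi E q x y = phi E q x' y *
    \prod_(eps in child_edges x x' | eps \notin edges_of (gamma E x' y)) q eps x'.
Proof.
move=> xx'_E notin; have xy_uniq := gamma_uniq x y.
rewrite /phi /phi_path (gamma_cons xx'_E notin) in xy_uniq *.
have [t x'y] := gamma_head_ex x' y; rewrite x'y in notin xy_uniq *.
rewrite [behead _]/= big_cons mulrC; congr (_ * _).
  apply: eq_big_seq => u u_t; apply: eq_bigl => eps.
  rewrite edges_of_cons2 in_cons negb_or.
  have [u_eps | //] := boolP (u \in eps); suff -> : eps != [set x; x'] by [].
  apply: contraTneq u_eps => ->; rewrite !inE negb_or.
  move: xy_uniq; rewrite /= !inE negb_or => /and3P[/andP[_ x_t] x'_t _].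
  by apply/andP; split; [apply: contraNneq x_t | apply: contraNneq x'_t] => <-.
apply: eq_bigl => eps; rewrite edges_of_cons2 in_cons negb_or !inE.
by case: (eps \in E); case: (x' \in eps).
Qed.

Lemma xhat_self x : xhat E f q x x = f x.
Proof.
rewrite /xhat gamma_self big_pred0 ?mulr1 // => eps.
have [x_eps | x_eps] /= := boolP (x \in eps); rewrite ?andbF // incident_cons_notin // /incident.
have -> : [exists u in eps, u \in ([::] : seq T)] = false.
  by apply/existsP => -[u]; rewrite in_nil andbF.
by rewrite !andbF.
Qed.

Lemma phi_self x : phi E q x x = 1.
Proof. by rewrite /phi gamma_self /phi_path big_nil. Qed.

Lemma prod_child_edges_notin_gamma x x' y eps :
  eps \in child_edges x x' -> eps \in edges_of (gamma E x' y) ->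
  \prod_(eps' in child_edges x x' | eps' \notin edges_of (gamma E x' y)) q eps' x' =
  \prod_(eps' in child_edges x x' | eps' != eps) q eps' x'.
Proof.
move=> eps_child eps_in; apply: eq_bigl => eps'.
have [eps'_child | //] /= := boolP (eps' \in child_edges x x').
apply/idP/idP; first by apply: contraNneq => ->.
by apply: contraNN => eps'_in; rewrite (child_edge_gamma_uniq eps'_child eps_child eps'_in eps_in).
Qed.

Lemma sum_branch_cons (P : pred T) (H : T -> T -> int) x x' : [set x; x'] \in E ->
  (forall y, [set x; x'] \notin edges_of (gamma E x' y) -> H x y =
     H x' y * \prod_(eps in child_edges x x' | eps \notin edges_of (gamma E x' y)) q eps x') ->
  \sum_(y | P y && ([set x; x'] \in edges_of (gamma E x y))) H x y =
  (if P x' then H x' x' * \prod_(eps in child_edges x x') q eps x' else 0) +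
  \sum_(eps in child_edges x x') (\prod_(eps' in child_edges x x' | eps' != eps) q eps' x') *
     \sum_(y | P y && (eps \in edges_of (gamma E x' y))) H x' y.
Proof.
move=> xx'_E H_cons; rewrite sum_branch //; congr (_ + _).
  by case: (P x') => //; rewrite H_cons gamma_self //; under eq_bigl do rewrite andbT.
apply: eq_bigr => eps eps_child; rewrite mulr_sumr; apply: eq_bigr => y /andP[_ eps_in].
have notin : [set x; x'] \notin edges_of (gamma E x' y).
  by rewrite -mem_edges_gamma_swap // (child_edge_branch xx'_E eps_child eps_in).
by rewrite H_cons // (prod_child_edges_notin_gamma eps_child eps_in) mulrC.
Qed.

Section RootedTree.
Variables (isA : pred T) (v0 : T).

Let ysum x e := \sum_(y in Yset E isA f x e) phi E q x y * ((valency E y)%:Z - 2).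

Lemma pfun_cons x x' : [set x; x'] \in E ->
  pfun E isA f q x [set x; x'] =
    (if isA x' && (f x' != 0) then f x' * \prod_(eps in child_edges x x') q eps x' else 0) +
    \sum_(eps in child_edges x x') (\prod_(eps' in child_edges x x' | eps' != eps) q eps' x') *
       pfun E isA f q x' eps.
Proof.
move=> xx'_E; rewrite /pfun (eq_bigl (fun a => (isA a && (f a != 0)) &&
  ([set x; x'] \in edges_of (gamma E x a)))) => [|a]; last by rewrite andbA.
rewrite (sum_branch_cons _ (H := xhat E f q) xx'_E) ?xhat_self => [|y]; last exact: xhat_cons.
congr (_ + _); apply: eq_bigr => eps _; congr (_ * _).
by apply: eq_bigl => a; rewrite andbA.
Qed.

Lemma ysum_cons x x' : [set x; x'] \in E ->
  ysum x [set x; x'] =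
    (if is_vertex isA x' || in_A0 isA f x'
     then \prod_(eps in child_edges x x') q eps x' * ((valency E x')%:Z - 2) else 0) +
    \sum_(eps in child_edges x x') (\prod_(eps' in child_edges x x' | eps' != eps) q eps' x') *
       ysum x' eps.
Proof.
move=> xx'_E; rewrite /ysum (eq_bigl (fun y => (is_vertex isA y || in_A0 isA f y) &&
  ([set x; x'] \in edges_of (gamma E x y)))) => [|y]; last by rewrite inE.
rewrite (sum_branch_cons _ (H := fun x y => phi E q x y * ((valency E y)%:Z - 2)) xx'_E).
  rewrite /= phi_self mul1r mulrC; congr (_ + _); apply: eq_bigr => eps _; congr (_ * _).
  by apply: eq_bigl => y; rewrite inE.
by move=> y notin /=; rewrite (phi_cons xx'_E notin) mulrAC.
Qed.

Hypotheses (arrow_leaf : forall a, isA a -> valency E a = 1%N)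
  (v0_root : is_root E isA q v0) (f01 : forall a, isA a -> f a = 0 \/ f a = 1).

Lemma pfun_out_edge_arrow x x' : [set x; x'] \in E -> isA x' ->
  pfun E isA f q x [set x; x'] = 1 + ysum x [set x; x'].
Proof.
move=> xx'_E x'_A; have no_child : child_edges x x' = set0.
  by apply: cards0_eq; move: (arrow_leaf x'_A); rewrite (valency_child_edges xx'_E) => -[].
rewrite pfun_cons // ysum_cons // (valency_child_edges xx'_E) no_child !big_set0 cards0.
by rewrite /is_vertex /in_A0 x'_A; case: (f01 x'_A) => -> /=; ring.
Qed.

Lemma pfun_out_edge_vertex x x' : [set x; x'] \in E -> x \in gamma E v0 x' -> ~~ isA x' ->
  {in child_edges x x', forall eps, pfun E isA f q x' eps = 1 + ysum x' eps} ->
  pfun E isA f q x [set x; x'] = 1 + ysum x [set x; x'].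
Proof.
move=> xx'_E x_in x'_V child_ok; have x_x' := edge_neq xx'_E.
have x'_v0 : x' != v0 by apply: contraTneq x_in => <-; rewrite gamma_self inE.
have one_weight : (#|[set eps in child_edges x x' | q eps x' != 1]| <= 1)%N.
  case: v0_root => _ _ /(_ x' x'_V x'_v0) [_]; apply: leq_trans.
  apply/subset_leq_card/subsetP => eps; rewrite !inE => /andP[/and3P[eps_E x'_eps eps_neq] ->].
  by rewrite eps_E x'_eps (mem_edges_gamma_last xx'_E x_in eps_E x'_eps) eps_neq.
rewrite pfun_cons // ysum_cons // /is_vertex x'_V (negbTE x'_V) add0r /=.
under eq_bigr => eps eps_child do rewrite child_ok // mulrDr mulr1.
rewrite big_split /= sum_prod_but_one // natz (valency_child_edges xx'_E) -addn1 PoszD.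
ring.
Qed.

Lemma pfun_out_edge x x' : [set x; x'] \in E -> x \in gamma E v0 x' ->
  pfun E isA f q x [set x; x'] = 1 + ysum x [set x; x'].
Proof.
have [n] := ubnP #|branch x x'|; elim: n x x' => // n IH x x' lt_n xx'_E x_in.
have [x'_A | x'_V] := boolP (isA x'); first exact: pfun_out_edge_arrow.
apply: pfun_out_edge_vertex => // eps eps_child.
have [c [eps_eq x'_in proper]] := child_edge_out xx'_E x_in eps_child.
rewrite eps_eq; rewrite eps_eq inE in eps_child; case/andP: eps_child => x'c_E _.
by apply: IH => //; apply: leq_trans (proper_card proper) _.
Qed.

End RootedTree.

End Weights.

End Tree.

Theorem lemma6p3 (T : finType) (E : {set {set T}}) (isA : pred T)
    (f : T -> int) (q : {set T} -> T -> int) (v0 : T) :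
  decorated_rooted_tree E isA q v0 ->
  (forall a, isA a -> f a = 0 \/ f a = 1) ->
  forall (x : T) (e : {set T}), out_pair E v0 x e ->
  pfun E isA f q x e =
    1 + \sum_(y in Yset E isA f x e) phi E q x y * ((valency E y)%:Z - 2).
Proof.
move=> [[Etree arrow_leaf _ _] v0_root] f01 x e [e_E [x' [e_eq /andP[_ x_in]]]]; subst e.
exact: (pfun_out_edge Etree arrow_leaf v0_root f01 e_E x_in).
Qed.
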